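(* Let $I=\ker\big(S\otimes_{\mathbf C}S\to\mathbf C[\mathcal M_{\ge0}]\otimes_{\mathbf C}S\big)$ be as in the context. Then $I$ is generated as an ideal of $S\otimes_{\mathbf C}S$ by \[ \{\,x^D\otimes x^E - x^E\otimes x^D \;\mid\; D,E\in\tilde M_{\ge0},\ [D]=[E]\,\}, \] and, if for each chamber $\Gamma$ of the arrangement $\mathcal A$ a set $\Xi_\Gamma$ of generators of the semigroup $M\cap\Gamma$ is chosen, also by \[ \{\,x^{D^+(m)}\otimes x^{D^-(m)} - x^{D^-(m)}\otimes x^{D^+(m)} \;\mid\; m\in\textstyle\bigcup_\Gamma\Xi_\Gamma\,\}, \] the union being over all chambers $\Gamma$.
   Context: Let $M=\mathbf Z^r$, $N=\mathrm{Hom}_{\mathbf Z}(M,\mathbf Z)$ with pairing $\langle\ ,\ \rangle$, and let $\Sigma$ be a finite complete fan in $N_{\mathbf R}$ (defining a complete toric variety $X$ over $\mathbf C$). Let $\rho_1,\dots,\rho_l$ be the one-dimensional cones of $\Sigma$ and $n_j\in N$ the primitive generator of $\rho_j$. Let $\tilde M$ be the free $\mathbf Z$-module with basis $\tilde m_1,\dots,\tilde m_l$, let $\pi^*:M\to\tilde M$, $\pi^*(m)=\sum_j\langle m,n_j\rangle\tilde m_j$, let $\mathcal M=\mathrm{coker}(\pi^* )$ and $\mu_j\in\mathcal M$ the image of $\tilde m_j$. Let $\tilde M_{\ge0}=\sum_j\mathbf Z_{\ge0}\tilde m_j$ and $\mathcal M_{\ge0}=\sum_j\mathbf Z_{\ge0}\mu_j$.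 Let $S=\mathbf C[x_1,\dots,x_l]$, graded by $\deg x_j=\mu_j$. For $D=\sum_j a_j\tilde m_j\in\tilde M_{\ge0}$ put $x^D=\prod_j x_j^{a_j}$ and $[D]=\sum_j a_j\mu_j$. For $m\in M$ put $D^+(m)=\sum_{\langle m,n_j\rangle>0}\langle m,n_j\rangle\tilde m_j$ and $D^-(m)=\sum_{\langle m,n_j\rangle<0}(-\langle m,n_j\rangle)\tilde m_j$. The $\mathbf C$-algebra homomorphism $S\otimes_{\mathbf C}S\to\mathbf C[\mathcal M_{\ge0}]\otimes_{\mathbf C}S$ is defined by $x^D\otimes x^E\mapsto\mathbf e([D])\otimes x^{D+E}$, where $\mathbf e(\alpha)$ denotes the basis element of the semigroup algebra $\mathbf C[\mathcal M_{\ge0}]$ corresponding to $\alpha$. Let $\mathcal A$ be the arrangement of hyperplanes $\{m\in\mathbf R^r:\langle m,n_j\rangle=0\}$, $j=1,\dots,l$; a chamber is a closed top-dimensional polyhedral cone of the partition of $\mathbf R^r$ induced by $\mathcal A$. *)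

From HB Require Import structures.
From mathcomp Require Import all_boot all_order all_algebra.
From Stdlib Require Import ClassicalEpsilon.
Set Implicit Arguments. Unset Strict Implicit. Unset Printing Implicit Defensive.
Import Order.TTheory GRing.Theory Num.Theory.
Local Open Scope ring_scope.

(* M = Z^r : integer vectors; N = Hom(M,Z) identified with Z^r via the
   standard pairing. *)
Definition vec (r : nat) := {ffun 'I_r -> int}.
Definition pairing (r : nat) (m v : vec r) : int := \sum_(i < r) m i * v i.

(* A finite family of vectors is
   the family of ray generators of some complete fan iff the vectors are
   primitive, pairwise distinct and their nonnegative span is all of N_R
   (equivalently, for rational data, of N_Q). *)
Definition primitive (r : nat) (v : vec r) : Prop :=
  forall k : int, (forall i, (k %| v i)%Z) -> `|k| = 1.

Definition complete_fan_rays (r l : nat) (n : 'I_l -> vec r) : Prop :=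
  [/\ forall j, primitive (n j),
      injective n &
      forall v : vec r, exists c : 'I_l -> rat,
        (forall j, 0 <= c j) /\
        forall i, (v i)%:~R = \sum_(j < l) c j * (n j i)%:~R].

(* Elements of tilde M_{>=0}: effective divisors sum a_j m_j, a_j in N. *)
Definition divisor (l : nat) := {ffun 'I_l -> nat}.
Definition addD (l : nat) (D E : divisor l) : divisor l := [ffun j => (D j + E j)%N].

(* [D] = [E] in calM = coker(pi^star) *)
Definition sameclass (r l : nat) (n : 'I_l -> vec r) (D E : divisor l) : Prop :=
  exists m : vec r, forall j, (D j)%:Z - (E j)%:Z = pairing m (n j).

Definition Dplus (r l : nat) (n : 'I_l -> vec r) (m : vec r) : divisor l :=
  [ffun j => let s := pairing m (n j) in if 0 < s then `|s|%N else 0%N].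
Definition Dminus (r l : nat) (n : 'I_l -> vec r) (m : vec r) : divisor l :=
  [ffun j => let s := pairing m (n j) in if s < 0 then `|s|%N else 0%N].

(* S (x) S = C[x_1..x_l] (x) C[x_1..x_l]: its monomials are x^D (x) x^E,
   indexed by pairs (D,E).  An element is represented as a finite formal
   sum (list of (coefficient, monomial)); two representations denote the same
   element iff all their coefficients agree (peq). *)
Definition mon (l : nat) := (divisor l * divisor l)%type.
Definition tpoly (C : ringType) (l : nat) := seq (C * mon l).

Definition coef (C : ringType) (l : nat) (p : tpoly C l) (u : mon l) : C :=
  \sum_(t <- p | t.2 == u) t.1.
Definition peq (C : ringType) (l : nat) (p q : tpoly C l) : Prop :=
  forall u, coef p u = coef q u.
Definition padd (C : ringType) (l : nat) (p q : tpoly C l) : tpoly C l := p ++ q.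
Definition pmul (C : ringType) (l : nat) (p q : tpoly C l) : tpoly C l :=
  [seq (a.1 * b.1, (addD a.2.1 b.2.1, addD a.2.2 b.2.2)) | a <- p, b <- q].

Definition binom (C : ringType) (l : nat) (D E : divisor l) : tpoly C l :=
  [:: (1, (D, E)); (-1, (E, D))].

Definition in_ideal (C : ringType) (l : nat) (G : tpoly C l -> Prop) (p : tpoly C l) : Prop :=
  exists rs : seq (tpoly C l * tpoly C l),
    (forall x, x \in rs -> G x.2) /\
    peq p (foldr (fun x acc => padd (pmul x.1 x.2) acc) [::] rs).

Definition pbool (P : Prop) : bool :=
  if excluded_middle_informative P then true else false.

(* The map S(x)S -> C[calM_{>=0}] (x) S, x^D (x) x^E |-> e([D]) (x) x^{D+E}.
   The coefficient of the basis element e([D0]) (x) x^F in the image of p is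
   the sum of the coefficients of the monomials x^D (x) x^E of p with
   [D] = [D0] and D + E = F; p is in the kernel iff all these vanish. *)
Definition image_coef (C : ringType) (r l : nat) (n : 'I_l -> vec r)
    (p : tpoly C l) (D0 F : divisor l) : C :=
  \sum_(t <- p | (addD t.2.1 t.2.2 == F) && pbool (sameclass n t.2.1 D0)) t.1.

Definition in_kernel (C : ringType) (r l : nat) (n : 'I_l -> vec r) (p : tpoly C l) : Prop :=
  forall D0 F : divisor l, image_coef n p D0 F = 0.

(* Chambers of the arrangement {<m,n_j> = 0}: a chamber is determined by a
   sign vector s (true = positive side) realized by some point in the open
   region; the closed chamber meets M in the points below. *)
Definition is_chamber (r l : nat) (n : 'I_l -> vec r) (s : 'I_l -> bool) : Prop :=
  exists m : vec r, forall j,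
    if s j then 0 < pairing m (n j) else pairing m (n j) < 0.
Definition in_chamber (r l : nat) (n : 'I_l -> vec r) (s : 'I_l -> bool) (m : vec r) : Prop :=
  forall j, if s j then 0 <= pairing m (n j) else pairing m (n j) <= 0.

Definition semigroup_generators (r l : nat) (n : 'I_l -> vec r) (s : 'I_l -> bool)
    (Xi : vec r -> Prop) : Prop :=
  (forall m, Xi m -> in_chamber n s m) /\
  (forall m, in_chamber n s m ->
     exists xs : seq (vec r), (forall x, x \in xs -> Xi x) /\ m = \sum_(x <- xs) x).

Definition gens1 (C : ringType) (r l : nat) (n : 'I_l -> vec r) (g : tpoly C l) : Prop :=
  exists D E : divisor l, sameclass n D E /\ g = binom C D E.

Definition gens2 (C : ringType) (r l : nat) (n : 'I_l -> vec r)
    (Xi : ('I_l -> bool) -> vec r -> Prop) (g : tpoly C l) : Prop :=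
  exists (s : 'I_l -> bool) (m : vec r),
    [/\ is_chamber n s, Xi s m & g = binom C (Dplus n m) (Dminus n m)].

From mathcomp Require Import all_boot all_order all_algebra.
From mathcomp Require Import zify.
From Stdlib Require Import ClassicalEpsilon.
Set Implicit Arguments. Unset Strict Implicit. Unset Printing Implicit Defensive.
Import Order.TTheory GRing.Theory Num.Theory.
Local Open Scope ring_scope.

(* A formal sum is in the kernel iff, for every pair ([D0], F), the coefficients of its monomials
   x^D (x) x^E with [D] = [D0] and D + E = F add up to zero.  Replacing each monomial by a fixed
   representative of its class changes the sum by multiples of binomials
   x^A (x) x^B - x^B (x) x^A with [A] = [B] and A, B of disjoint support, and what remains cancels.
   Such a binomial is the one attached to m = A - B, namely with (A, B) = (D^+(m), D^-(m)).  Take a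
   chamber containing m (it exists by perturbing m off all hyperplanes) and write m as a sum of
   generators of that chamber; D^+ and D^- are additive on a chamber, so the binomial telescopes
   into binomials of the generators.  Conversely every binomial with [D] = [E] lies in the kernel,
   as x^D (x) x^E and x^E (x) x^D have the same image. *)

Section FormalSums.

Variables (C : ringType) (l : nat).
Implicit Types (p q a : tpoly C l) (u v w : mon l).

Definition mon_mul u v : mon l := (addD u.1 v.1, addD u.2 v.2).
Definition mon1 : mon l := ([ffun => 0%N], [ffun => 0%N]).

Lemma mon_mulA : associative mon_mul.
Proof. by move=> u v w; congr pair; apply/ffunP => j; rewrite !ffunE addnA. Qed.

Lemma mon_mul1l : left_id mon1 mon_mul.
Proof. by case=> D E; congr pair; apply/ffunP => j; rewrite !ffunE. Qed.

Lemma coef_nil u : coef ([::] : tpoly C l) u = 0.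
Proof. exact: big_nil. Qed.

Lemma coef_cons t p u : coef (t :: p) u = (if t.2 == u then t.1 else 0) + coef p u.
Proof. by rewrite /coef big_cons; case: ifP; rewrite ?add0r. Qed.

Lemma coef_cat p q u : coef (p ++ q) u = coef p u + coef q u.
Proof. exact: big_cat. Qed.

Lemma coef_flatten (ps : seq (tpoly C l)) u :
  coef (flatten ps) u = \sum_(q <- ps) coef q u.
Proof. by elim: ps => [|q ps IH]; rewrite ?big_nil ?coef_nil //= coef_cat IH big_cons. Qed.

Lemma big_pmul p q (F : C * mon l -> C) :
  \sum_(t <- pmul p q) F t = \sum_(a <- p) \sum_(b <- q) F (a.1 * b.1, mon_mul a.2 b.2).
Proof.
elim: p => [|a p IH]; first by rewrite !big_nil.
by rewrite /pmul /= big_cat big_map -/(pmul p q) IH big_cons.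
Qed.

Lemma coef_pmul p q u :
  coef (pmul p q) u =
  \sum_(a <- p) \sum_(b <- q) (if mon_mul a.2 b.2 == u then a.1 * b.1 else 0).
Proof. by rewrite /coef big_mkcond big_pmul. Qed.

Lemma sum_coef (U : seq (mon l)) (P : pred (mon l)) p :
  uniq U -> {subset map snd p <= U} ->
  \sum_(t <- p | P t.2) t.1 = \sum_(u <- U | P u) coef p u.
Proof.
move=> uniqU; elim: p => [|t p IH] pU.
  by rewrite big_nil big1 // => u _; rewrite coef_nil.
have tU : t.2 \in U by apply: pU; rewrite inE eqxx.
rewrite big_cons IH => [|x xp]; last by apply: pU; rewrite inE xp orbT.
under [in RHS]eq_bigr => u _ do rewrite coef_cons.
rewrite big_split /= [X in _ = X + _](big_rem t.2) //= eqxx.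
rewrite [X in _ = _ + X + _]big1_seq ?addr0 => [|u /andP[_ uU]].
  by case: ifP; rewrite ?add0r.
by case: eqP uU => // <-; rewrite mem_rem_uniqF.
Qed.

Lemma peq_sum (P : pred (mon l)) p q :
  peq p q -> \sum_(t <- p | P t.2) t.1 = \sum_(t <- q | P t.2) t.1.
Proof.
move=> epq; pose U := undup (map snd (p ++ q)).
have sub_pU : {subset map snd p <= U} by move=> x xp; rewrite mem_undup map_cat mem_cat xp.
have sub_qU : {subset map snd q <= U}.
  by move=> x xq; rewrite mem_undup map_cat mem_cat xq orbT.
rewrite (sum_coef _ (undup_uniq _) sub_pU) (sum_coef _ (undup_uniq _) sub_qU).
by apply: eq_bigr => u _; rewrite epq.
Qed.

Lemma peq_trans p q s : peq p q -> peq q s -> peq p s.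
Proof. by move=> e1 e2 u; rewrite e1 e2. Qed.

Lemma peq_pmulr a p q : peq p q -> peq (pmul a p) (pmul a q).
Proof.
move=> epq u; rewrite !coef_pmul; apply: eq_bigr => x _.
rewrite -!big_mkcond -!mulr_sumr; congr (_ * _).
exact: (peq_sum (fun w => mon_mul x.2 w == u) epq).
Qed.

Lemma pmulA a p q : peq (pmul (pmul a p) q) (pmul a (pmul p q)).
Proof.
move=> u; rewrite !coef_pmul big_pmul; apply: eq_bigr => x _.
rewrite big_mkcond big_pmul; under eq_bigr do rewrite big_mkcond.
by apply: eq_bigr => y _; apply: eq_bigr => z _; rewrite /= mon_mulA mulrA.
Qed.

Lemma pmul_catr a p q : peq (pmul a (p ++ q)) (pmul a p ++ pmul a q).
Proof.
by move=> u; rewrite coef_cat !coef_pmul -big_split; apply: eq_bigr => x _; rewrite big_cat.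
Qed.

Lemma pmul_nilr a : peq (pmul a [::]) [::].
Proof. by move=> u; rewrite coef_pmul coef_nil big1 // => x _; rewrite big_nil. Qed.

Definition ideal_comb (rs : seq (tpoly C l * tpoly C l)) : tpoly C l :=
  foldr (fun x acc => padd (pmul x.1 x.2) acc) [::] rs.

Lemma ideal_comb_cat rs1 rs2 : ideal_comb (rs1 ++ rs2) = ideal_comb rs1 ++ ideal_comb rs2.
Proof. by elim: rs1 => //= x rs IH; rewrite /padd IH catA. Qed.

Section Ideal.

Variable G : tpoly C l -> Prop.

Lemma in_ideal_peq p q : peq p q -> in_ideal G q -> in_ideal G p.
Proof. by move=> epq [rs [Grs Eq]]; exists rs; split => //; apply: peq_trans epq Eq. Qed.

Lemma in_ideal_nil : in_ideal G [::].
Proof. by exists [::]. Qed.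

Lemma in_idealD p q : in_ideal G p -> in_ideal G q -> in_ideal G (p ++ q).
Proof.
move=> [rs1 [G1 E1]] [rs2 [G2 E2]]; exists (rs1 ++ rs2); split.
  by move=> x; rewrite mem_cat => /orP[/G1|/G2].
by rewrite -/(ideal_comb _) ideal_comb_cat => u; rewrite !coef_cat E1 E2.
Qed.

Lemma in_ideal_flatten (ps : seq (tpoly C l)) :
  (forall q, q \in ps -> in_ideal G q) -> in_ideal G (flatten ps).
Proof.
elim: ps => [|q ps IH] Gps; first exact: in_ideal_nil.
by apply: in_idealD; [apply: Gps; rewrite inE eqxx | apply: IH => x xps; apply: Gps; rewrite inE xps orbT].
Qed.

Lemma in_ideal_gen g : G g -> in_ideal G g.
Proof.
move=> Gg; exists [:: ([:: (1, mon1)], g)]; split; first by move=> x; rewrite inE => /eqP ->.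
move=> u /=; rewrite /padd cats0 coef_pmul big_seq1 /coef big_mkcond /=.
by apply: eq_bigr => b _; rewrite mon_mul1l mul1r.
Qed.

Lemma in_idealM a q : in_ideal G q -> in_ideal G (pmul a q).
Proof.
move=> [rs [Grs Eq]]; exists [seq (pmul a x.1, x.2) | x <- rs]; split.
  by move=> x /mapP[y yrs ->]; exact: Grs yrs.
apply: peq_trans (peq_pmulr a Eq) _; rewrite -/(ideal_comb _).
elim: rs {Grs Eq} => [|x rs IH] /=; first exact: pmul_nilr.
by apply: peq_trans (pmul_catr _ _ _) _ => u; rewrite !coef_cat IH pmulA.
Qed.

End Ideal.

Lemma in_ideal_sub (G G' : tpoly C l -> Prop) p :
  (forall g, G g -> G' g) -> in_ideal G p -> in_ideal G' p.
Proof. by move=> GG' [rs [Grs Eq]]; exists rs; split => // x /Grs /GG'. Qed.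

End FormalSums.

Section Binomials.

Variables (C : ringType) (l : nat) (G : tpoly C l -> Prop).

Lemma binom00 : peq (binom C [ffun => 0%N] [ffun => 0%N]) ([::] : tpoly C l).
Proof. by move=> u; rewrite !coef_cons coef_nil; case: ifP; rewrite ?addr0 ?subrr. Qed.

(* [x^(P+P') (x) x^(N+N') - x^(N+N') (x) x^(P+P')] is
   [(x^P' (x) x^N') (x^P (x) x^N - x^N (x) x^P) + (x^N (x) x^P) (x^P' (x) x^N' - x^N' (x) x^P')]. *)
Lemma in_ideal_binomD P N P' N' :
  in_ideal G (binom C P N) -> in_ideal G (binom C P' N') ->
  in_ideal G (binom C (addD P P') (addD N N')).
Proof.
have addDC (A B : divisor l) : addD A B = addD B A.
  by apply/ffunP => j; rewrite !ffunE addnC.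
move=> GPN GPN'.
apply: (@in_ideal_peq _ _ _ _ (pmul [:: (1, (P', N'))] (binom C P N) ++
                               pmul [:: (1, (N, P))] (binom C P' N'))).
  move=> u; rewrite coef_cat !coef_pmul !big_cons !big_nil !coef_cons coef_nil /mon_mul /=.
  rewrite (addDC P' P) (addDC N' N) (addDC N P') (addDC P N') !mul1r !addr0 -addrA.
  have cancel (b : bool) : (if b then (-1 : C) else 0) + (if b then 1 else 0) = 0.
    by case: b; rewrite ?addNr ?addr0.
  by congr (_ + _); rewrite addrA cancel add0r.
by apply: in_idealD; apply: in_idealM.
Qed.

End Binomials.

Section ClassRepresentative.

Variables (T : eqType) (e : rel T).
Hypotheses (e_refl : reflexive e) (e_sym : symmetric e) (e_trans : transitive e).

Definition class_rep (s : seq T) (x : T) : T := nth x s (find (e x) s).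

Lemma class_repP s x : x \in s -> e x (class_rep s x).
Proof. by move=> xs; apply: nth_find; apply/hasP; exists x. Qed.

Lemma class_rep_eq s x y : x \in s -> e x y -> class_rep s x = class_rep s y.
Proof.
move=> xs exy; rewrite /class_rep.
have -> : find (e x) s = find (e y) s.
  by apply: eq_find => z; rewrite e_sym [e y z]e_sym; apply/idP/idP => /e_trans; apply; rewrite // e_sym.
by apply: set_nth_default; rewrite -has_find; apply/hasP; exists x; rewrite // e_sym.
Qed.

End ClassRepresentative.

Lemma pboolP (P : Prop) : reflect P (pbool P).
Proof. by rewrite /pbool; case: excluded_middle_informative => H; constructor. Qed.

Lemma pbool_eq (P Q : Prop) : (P <-> Q) -> pbool P = pbool Q.
Proof. by move=> [PQ QP]; apply/pboolP/pboolP. Qed.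

Section Pairing.

Variable r : nat.
Implicit Types m v : vec r.

Lemma pairing0l v : pairing 0 v = 0.
Proof. by rewrite /pairing big1 // => i _; rewrite ffunE mul0r. Qed.

Lemma pairingDl m1 m2 v : pairing (m1 + m2) v = pairing m1 v + pairing m2 v.
Proof. by rewrite /pairing -big_split; apply: eq_bigr => i _; rewrite ffunE mulrDl. Qed.

Lemma pairingNl m v : pairing (- m) v = - pairing m v.
Proof. by rewrite /pairing -sumrN; apply: eq_bigr => i _; rewrite ffunE mulNr. Qed.

End Pairing.

Section Kernel.

Variables (C : ringType) (r l : nat) (n : 'I_l -> vec r).
Implicit Types (p q : tpoly C l) (u w : mon l) (A B D E : divisor l).

Lemma sameclass_refl D : sameclass n D D.
Proof. by exists 0 => j; rewrite pairing0l subrr. Qed.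

Lemma sameclass_sym D E : sameclass n D E -> sameclass n E D.
Proof. by move=> [m Hm]; exists (- m) => j; rewrite pairingNl -Hm opprB. Qed.

Lemma sameclass_trans D E F : sameclass n D E -> sameclass n E F -> sameclass n D F.
Proof. by move=> [m1 H1] [m2 H2]; exists (m1 + m2) => j; rewrite pairingDl -H1 -H2 addrA subrK. Qed.

Lemma sameclass_addl B D E : sameclass n D E -> sameclass n (addD B D) (addD B E).
Proof.
by move=> [m Hm]; exists m => j; rewrite -Hm !ffunE !PoszD opprD addrACA subrr add0r.
Qed.

Lemma image_coef_peq p q D0 F : peq p q -> image_coef n p D0 F = image_coef n q D0 F.
Proof. exact: (peq_sum (fun w => (addD w.1 w.2 == F) && pbool (sameclass n w.1 D0))). Qed.

Lemma image_coef_cat p q D0 F :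
  image_coef n (p ++ q) D0 F = image_coef n p D0 F + image_coef n q D0 F.
Proof. exact: big_cat. Qed.

Lemma image_coef_pmul_binom p D E D0 F :
  sameclass n D E -> image_coef n (pmul p (binom C D E)) D0 F = 0.
Proof.
move=> sDE; rewrite /image_coef big_mkcond big_pmul big1 // => b _.
rewrite big_cons big_seq1 /= mulr1 mulrN1.
have -> : addD (addD b.2.1 E) (addD b.2.2 D) = addD (addD b.2.1 D) (addD b.2.2 E).
  by apply/ffunP => j; rewrite !ffunE; lia.
have -> : pbool (sameclass n (addD b.2.1 E) D0) = pbool (sameclass n (addD b.2.1 D) D0).
  apply: pbool_eq; split; apply: sameclass_trans; apply: sameclass_addl => //.
  exact: sameclass_sym.
by case: ifP; rewrite ?subrr ?addr0.
Qed.

Lemma ideal_gens1_kernel p : in_ideal (@gens1 C r l n) p -> in_kernel n p.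
Proof.
move=> [rs [Grs Eq]] D0 F; rewrite (image_coef_peq D0 F Eq).
elim: rs Grs {Eq} => [|x rs IH] Grs /=; first exact: big_nil.
rewrite /padd image_coef_cat IH => [|y yrs]; last by apply: Grs; rewrite inE yrs orbT.
have [D [E [sDE ->]]] : gens1 n x.2 by apply: Grs; rewrite inE eqxx.
by rewrite image_coef_pmul_binom // add0r.
Qed.

Definition same_image u w : bool :=
  (addD u.1 u.2 == addD w.1 w.2) && pbool (sameclass n u.1 w.1).

Lemma same_image_refl : reflexive same_image.
Proof. by move=> u; rewrite /same_image eqxx; apply/pboolP/sameclass_refl. Qed.

Lemma same_image_sym : symmetric same_image.
Proof.
move=> u w; rewrite /same_image eq_sym; congr andb.
by apply: pbool_eq; split; apply: sameclass_sym.
Qed.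

Lemma same_image_trans : transitive same_image.
Proof.
rewrite /same_image => v u w /andP[/eqP -> /pboolP uv] /andP[/eqP -> /pboolP vw].
by rewrite eqxx; apply/pboolP; apply: sameclass_trans uv vw.
Qed.

(* In the kernel, the coefficients of all monomials with a common image cancel, so sending every
   monomial to a fixed representative of its image kills [p]. *)
Lemma kernel_class_rep_sum p u :
  in_kernel n p ->
  \sum_(t <- p) (if class_rep same_image (map snd p) t.2 == u then t.1 else 0) = 0.
Proof.
move=> kerp; set rho := class_rep _ _.
have rho_eq t t0 : t \in p -> t0 \in p -> (rho t.2 == rho t0.2) = same_image t.2 t0.2.
  move=> tp t0p; apply/eqP/idP => [e|].
    have rho_t : same_image t.2 (rho t.2) := class_repP same_image_refl (map_f snd tp).
    have rho_t0 : same_image t0.2 (rho t0.2) := class_repP same_image_refl (map_f snd t0p).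
    rewrite e in rho_t; rewrite same_image_sym in rho_t0.
    exact: same_image_trans rho_t rho_t0.
  by move=> e; exact: (class_rep_eq same_image_sym same_image_trans (map_f snd tp) e).
have [/hasP[t0 t0p /eqP <-] | /hasPn nou] := boolP (has (fun t => rho t.2 == u) p).
  rewrite (eq_big_seq (fun t => if same_image t.2 t0.2 then t.1 else 0)) => [|t tp].
    by rewrite -big_mkcond; apply: kerp.
  by rewrite rho_eq.
by rewrite big1_seq // => t /andP[_ /nou /negbTE ->].
Qed.

Definition disjoint_support A B := forall j, A j = 0%N \/ B j = 0%N.

(* Subtraction on [nat] truncates, so [mon_quot w w1] is [w.1 - gcd(w.1, w1.1)]. *)
Definition mon_quot w w1 : divisor l := [ffun j => (w.1 j - w1.1 j)%N].
Definition mon_cofactor w w1 : mon l :=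
  ([ffun j => minn (w.1 j) (w1.1 j)], [ffun j => (w.2 j - (w1.1 j - w.1 j))%N]).

Lemma mon_split w w1 : addD w.1 w.2 = addD w1.1 w1.2 ->
  mon_mul (mon_cofactor w w1) (mon_quot w w1, mon_quot w1 w) = w /\
  mon_mul (mon_cofactor w w1) (mon_quot w1 w, mon_quot w w1) = w1.
Proof.
case: w w1 => [D E] [D1 E1] /= /ffunP e; split; congr pair; apply/ffunP => j;
  move: (e j); rewrite !ffunE /=; lia.
Qed.

Lemma mon_quot_sameclass w w1 :
  sameclass n w.1 w1.1 -> sameclass n (mon_quot w w1) (mon_quot w1 w).
Proof. by move=> [m Hm]; exists m => j; rewrite -Hm !ffunE; lia. Qed.

Lemma mon_quot_disjoint w w1 : disjoint_support (mon_quot w w1) (mon_quot w1 w).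
Proof. by move=> j; rewrite !ffunE; lia. Qed.

Definition split_binom (c : C) w w1 : tpoly C l :=
  pmul [:: (c, mon_cofactor w w1)] (binom C (mon_quot w w1) (mon_quot w1 w)).

Lemma coef_split_binom c w w1 u : addD w.1 w.2 = addD w1.1 w1.2 ->
  coef (split_binom c w w1) u = (if w == u then c else 0) - (if w1 == u then c else 0).
Proof.
move=> deg; rewrite coef_pmul big_seq1 big_cons big_seq1 /= mulr1 mulrN1.
have [-> ->] := mon_split deg.
by case: ifP; case: ifP; rewrite ?subr0 ?sub0r ?add0r ?addr0.
Qed.

Lemma kernel_in_ideal (G : tpoly C l -> Prop) :
  (forall A B, sameclass n A B -> disjoint_support A B -> in_ideal G (binom C A B)) ->
  forall p, in_kernel n p -> in_ideal G p.
Proof.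
move=> G_binom p kerp; set rho := class_rep same_image (map snd p).
have rho_p t : t \in p -> same_image t.2 (rho t.2).
  by move=> tp; exact: (class_repP same_image_refl (map_f snd tp)).
pose f t := split_binom t.1 t.2 (rho t.2).
apply: (@in_ideal_peq _ _ _ _ (flatten [seq f t | t <- p])).
  move=> u; rewrite coef_flatten big_map.
  rewrite (eq_big_seq (fun t => (if t.2 == u then t.1 else 0) -
                                (if rho t.2 == u then t.1 else 0))) => [|t tp].
    by rewrite sumrB kernel_class_rep_sum // subr0 /coef big_mkcond.
  by apply: coef_split_binom; case/andP: (rho_p t tp) => /eqP.
apply: in_ideal_flatten => _ /mapP[t tp ->]; apply: in_idealM; apply: G_binom.
  by apply: mon_quot_sameclass; case/andP: (rho_p t tp) => _ /pboolP.
exact: mon_quot_disjoint.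
Qed.

End Kernel.

Lemma primitive_neq0 r (v : vec r) : primitive v -> exists i, v i != 0.
Proof.
move=> prim_v; have [/existsP //|] := boolP [exists i, v i != 0].
rewrite negb_exists => /forallP v0.
suff : `|2%:Z| = 1 by [].
by apply: prim_v => i; move/negPn/eqP: (v0 i) ->; apply: dvdz0.
Qed.

Lemma exists_int_nonroot (P : {poly int}) : P != 0 -> exists x : int, ~~ root P x.
Proof.
move=> P0; pose xs := [seq k%:Z | k <- iota 0 (size P)].
have /allPn[x _ Px] : ~~ all (root P) xs; last by exists x.
apply/negP => /(max_poly_roots P0).
rewrite map_inj_uniq ?iota_uniq => [|a b []//].
by rewrite size_map size_iota ltnn => /(_ isT).
Qed.

(* Evaluate the nonzero polynomials [sum_i (n_j)_i X^i] at a common integer non-root [x]: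
   the point [(x^i)_i] of the moment curve lies on none of the hyperplanes. *)
Lemma exists_generic_covector r l (n : 'I_l -> vec r) :
  (forall j, exists i, n j i != 0) -> exists v : vec r, forall j, pairing v (n j) != 0.
Proof.
move=> n_neq0; pose P j : {poly int} := \sum_(i < r) (n j i)%:P * 'X^i.
have P_neq0 j : P j != 0.
  have [i0 ni0] := n_neq0 j; apply: contraNneq ni0 => Pj0.
  have : (P j)`_i0 = 0 by rewrite Pj0 coef0.
  rewrite coef_sum (bigD1 i0) //= coefCM coefXn eqxx mulr1 big1 ?addr0 => [->//|i ne_i].
  by rewrite coefCM coefXn eq_sym (inj_eq val_inj) (negbTE ne_i) mulr0.
have Q_neq0 : \prod_j P j != 0 by apply/prodf_neq0 => j _; apply: P_neq0.
have [x Qx] := exists_int_nonroot Q_neq0.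
exists [ffun i : 'I_r => x ^+ i] => j.
have : (P j).[x] != 0 by move: Qx; rewrite /root horner_prod => /prodf_neq0; apply.
rewrite /pairing horner_sum; congr (_ != _); apply: eq_bigr => i _.
by rewrite hornerCM hornerXn ffunE mulrC.
Qed.

Lemma perturbed_sign (N a b : int) : b != 0 -> `|b| < N ->
  [/\ N * a + b != 0, 0 < N * a + b -> 0 <= a & N * a + b < 0 -> a <= 0].
Proof.
move=> b0 bN; have [a0|a_neq0] := eqVneq a 0; first by rewrite a0 mulr0 add0r.
split; [apply/negP => /eqP | move=> pos | move=> neg]; move: b0 bN a_neq0; nia.
Qed.

Section Chambers.

Variables (r l : nat) (n : 'I_l -> vec r).
Implicit Types (m x y : vec r) (s : 'I_l -> bool).

(* Perturb [m] to [N m + v] with [v] off all hyperplanes and [N] large: the signs of the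
   perturbation define a chamber, and the closed chamber contains [m]. *)
Lemma exists_chamber : (forall j, exists i, n j i != 0) ->
  forall m, exists s, is_chamber n s /\ in_chamber n s m.
Proof.
move=> n_neq0 m; have [v v_gen] := exists_generic_covector n_neq0.
pose N : int := 1 + \sum_(j < l) `|pairing v (n j)|.
have vN j : `|pairing v (n j)| < N.
  rewrite /N (bigD1 j) //= addrCA ltrDl; apply: lt_le_trans ltr01 _.
  by rewrite lerDl; apply: sumr_ge0 => i _; apply: normr_ge0.
pose m' : vec r := [ffun i => N * m i + v i].
have m'E j : pairing m' (n j) = N * pairing m (n j) + pairing v (n j).
  rewrite /pairing mulr_sumr -big_split; apply: eq_bigr => i _.
  by rewrite ffunE mulrDl mulrA.
exists (fun j => 0 < pairing m' (n j)); split => [|j]; [exists m' => j|];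
  have [m'0 pos neg] := perturbed_sign (pairing m (n j)) (v_gen j) (vN j);
  rewrite m'E; case: ltP => [/pos //|]; rewrite le_eqVlt (negbTE m'0) //= => /neg.
Qed.

Lemma sameclass_Dplus_Dminus m : sameclass n (Dplus n m) (Dminus n m).
Proof. by exists m => j; rewrite !ffunE /=; do 2 case: ifP; lia. Qed.

Lemma disjoint_sameclassE m (A B : divisor l) :
  (forall j, (A j)%:Z - (B j)%:Z = pairing m (n j)) -> disjoint_support A B ->
  A = Dplus n m /\ B = Dminus n m.
Proof.
by move=> ABm AB0; split; apply/ffunP => j; rewrite ffunE /= -ABm; case: ifP; move: (AB0 j); lia.
Qed.

Lemma in_chamber0 s : in_chamber n s 0.
Proof. by move=> j; rewrite pairing0l; case: (s j). Qed.

Lemma in_chamberD s x y : in_chamber n s x -> in_chamber n s y -> in_chamber n s (x + y).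
Proof. by move=> Hx Hy j; move: (Hx j) (Hy j); rewrite pairingDl; case: (s j); lia. Qed.

Lemma Dplus_Dminus0 : Dplus n 0 = [ffun => 0%N] /\ Dminus n 0 = [ffun => 0%N].
Proof. by split; apply/ffunP => j; rewrite !ffunE pairing0l. Qed.

Lemma Dplus_DminusD s x y : in_chamber n s x -> in_chamber n s y ->
  Dplus n (x + y) = addD (Dplus n x) (Dplus n y) /\
  Dminus n (x + y) = addD (Dminus n x) (Dminus n y).
Proof.
move=> Hx Hy; split; apply/ffunP => j; move: (Hx j) (Hy j);
  rewrite !ffunE /= pairingDl; case: (s j); do 3 case: ifP; lia.
Qed.

Lemma in_chamber_sum s xs :
  (forall x, x \in xs -> in_chamber n s x) -> in_chamber n s (\sum_(x <- xs) x).
Proof.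
elim: xs => [|x xs IH] sxs; first by rewrite big_nil; apply: in_chamber0.
by rewrite big_cons; apply: in_chamberD (sxs _ (mem_head _ _)) (IH _) => y yxs;
  apply: sxs; rewrite inE yxs orbT.
Qed.

Lemma in_ideal_binom_sum (C : ringType) (G : tpoly C l -> Prop) s xs :
  (forall x, x \in xs -> in_chamber n s x) ->
  (forall x, x \in xs -> in_ideal G (binom C (Dplus n x) (Dminus n x))) ->
  in_ideal G (binom C (Dplus n (\sum_(x <- xs) x)) (Dminus n (\sum_(x <- xs) x))).
Proof.
elim: xs => [|x xs IH] sxs Gxs.
  by rewrite big_nil; have [-> ->] := Dplus_Dminus0; apply: in_ideal_peq (@binom00 C l) (in_ideal_nil G).
have sxs' y : y \in xs -> in_chamber n s y by move=> yxs; apply: sxs; rewrite inE yxs orbT.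
rewrite big_cons; have [-> ->] := Dplus_DminusD (sxs _ (mem_head _ _)) (in_chamber_sum sxs').
by apply: in_ideal_binomD; [apply: Gxs; rewrite mem_head | apply: IH => // y yxs; apply: Gxs; rewrite inE yxs orbT].
Qed.

End Chambers.

Section Generators.

Variables (C : ringType) (r l : nat) (n : 'I_l -> vec r).
Variable Xi : ('I_l -> bool) -> vec r -> Prop.

Lemma gens2_gens1 g : @gens2 C r l n Xi g -> @gens1 C r l n g.
Proof.
by move=> [s [m [_ _ ->]]]; exists (Dplus n m), (Dminus n m); split; first exact: sameclass_Dplus_Dminus.
Qed.

Lemma disjoint_binom_in_ideal_gens2 (A B : divisor l) :
  (forall j, exists i, n j i != 0) ->
  (forall s, is_chamber n s -> semigroup_generators n s (Xi s)) ->
  sameclass n A B -> disjoint_support A B -> in_ideal (@gens2 C r l n Xi) (binom C A B).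
Proof.
move=> n_neq0 gensXi [m ABm] AB0; have [-> ->] := disjoint_sameclassE ABm AB0.
have [s [chamber_s ms]] := exists_chamber n_neq0 m.
have [Xi_s Xi_gen] := gensXi s chamber_s.
have [xs [xsXi ->]] := Xi_gen m ms.
apply: (in_ideal_binom_sum (s := s)) => [x /xsXi/Xi_s //|x xxs].
by apply: in_ideal_gen; exists s, x; split => //; apply: xsXi.
Qed.

End Generators.

Theorem mainTheorem2 (C : numClosedFieldType) (r l : nat) (n : 'I_l -> vec r)
  (Hfan : complete_fan_rays n)
  (Xi : ('I_l -> bool) -> vec r -> Prop)
  (HXi : forall s, is_chamber n s -> semigroup_generators n s (Xi s)) :
  (forall p : tpoly C l, in_kernel n p <-> in_ideal (@gens1 C r l n) p) /\
  (forall p : tpoly C l, in_kernel n p <-> in_ideal (@gens2 C r l n Xi) p).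
Proof.
have n_neq0 j : exists i, n j i != 0 by case: Hfan => prim _ _; apply: primitive_neq0.
split=> p; split.
- by apply: kernel_in_ideal => A B AB AB0; apply: in_ideal_gen; exists A, B.
- exact: ideal_gens1_kernel.
- by apply: kernel_in_ideal => A B; apply: disjoint_binom_in_ideal_gens2.
- by move/(in_ideal_sub (@gens2_gens1 C r l n Xi)); apply: ideal_gens1_kernel.
Qed.
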